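(* Let $0\leq k'\leq k$ and $0\leq \ell'\leq \ell$. Set $\mathcal{A}= \mathbb{C}\langle X_1,\ldots,X_k,Y_1,\ldots,Y_{\ell}\rangle$, $\mathcal{A}_1=\mathbb{C}\langle X_1,\ldots,X_k\rangle$, $\mathcal{A}_2=\mathbb{C}\langle Y_1,\ldots,Y_{\ell}\rangle$; let $\mathcal{I}_1$ be the ideal of $\mathcal{A}_1$ generated by $X_1,\ldots,X_{k'}$, $\mathcal{I}_2$ the ideal of $\mathcal{A}_2$ generated by $Y_1,\ldots,Y_{\ell'}$, and $\mathcal{I}$ the ideal of $\mathcal{A}$ generated by $\mathcal{I}_1\cup \mathcal{I}_2$. Let $\tau:\mathcal{A}\to\mathbb{C}$ be a unital linear functional and $\tau':\mathcal{A}\to\mathbb{C}$ a linear functional with $\tau'(1)=0$, such that $\mathcal{I}\subset \ker(\tau)$ and $\mathbb{C}\langle X_{k'+1},\ldots,X_k,Y_{\ell'+1},\ldots,Y_{\ell}\rangle\subset \ker(\tau')$. Assume that $(\mathcal{A}_1,\mathcal{I}\cap \mathcal{A}_1)$ and $(\mathcal{A}_2,\mathcal{I}\cap \mathcal{A}_2)$ are free of type $B$ in $(\mathcal{A},\tau,\mathcal{I},\tau'|_{\mathcal{I}})$. Then $\mathcal{A}_1$ and $\mathcal{A}_2$ are infinitesimally free with respect to $(\tau,\tau')$.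
   Context: Freeness of type $B$: for a unital linear functional $\tau$ on a unital algebra $\mathcal{A}$, an ideal $\mathcal{I}$ and a linear $\tau':\mathcal{I}\to\mathbb{C}$, and unital subalgebras $\mathcal{A}_1,\mathcal{A}_2$ with subspaces $V_h\subset\mathcal{I}\cap\mathcal{A}_h$ stable under two-sided multiplication by $\mathcal{A}_h$, $(\mathcal{A}_1,V_1)$ and $(\mathcal{A}_2,V_2)$ are free of type $B$ if $\mathcal{A}_1,\mathcal{A}_2$ are free w.r.t. $\tau$ and whenever $a_n\in\mathcal{A}_{i_n},\dots,a_1\in\mathcal{A}_{i_1}$, $v\in V_h$, $b_1\in\mathcal{A}_{j_1},\dots,b_m\in\mathcal{A}_{j_m}$ with consecutive indices in $i_n,\dots,i_1,h,j_1,\dots,j_m$ all different and all $a_r,b_s$ centered for $\tau$, one has $\tau'(a_n\cdots a_1vb_1\cdots b_m)=\tau(a_nb_m)\cdots\tau(a_1b_1)\tau'(v)$ if $n=m$ and $i_r=j_r$ for all $r$, and $0$ otherwise. Infinitesimal freeness w.r.t. $(\tau,\tau')$: whenever $a_j\in\mathcal{A}_{i_j}$ with consecutive indices different and $\tau(a_j)=0$ for all $j$, $\tau(a_1\cdots a_n)=0$ and $\tau'(a_1\cdots a_n)=\sum_{j=1}^n\tau(a_1\cdots a_{j-1}\tau'(a_j)a_{j+1}\cdots a_n)$. *)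

From HB Require Import structures.
From mathcomp Require Import all_boot all_order all_algebra.
From mathcomp Require Import finmap Rstruct complex monalg.

Set Implicit Arguments.
Unset Strict Implicit.
Unset Printing Implicit Defensive.

Import Order.TTheory GRing.Theory Num.Theory.
Local Open Scope ring_scope.

Definition CC : numClosedFieldType := (Rdefinitions.R[i])%C.

(* Two subalgebras are encoded as S : bool -> (A -> Prop):            *)
(*   S false = A_1, S true = A_2.                                      *)
(* A finite sequence a_1, ..., a_n with a_j in A_{i_j} is encoded as   *)
(* a list of pairs (i_j, a_j).                                         *)
Section Freeness.
Variable A : lalgType CC.

Definition alternating (s : seq (bool * A)) : bool :=
  sorted (fun x y => x.1 != y.1) s.

Definition centered_in (tau : A -> CC) (S : bool -> A -> Prop)
  (s : seq (bool * A)) : Prop :=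
  forall x, x \in s -> S x.1 x.2 /\ tau x.2 = 0.

Definition free (tau : A -> CC) (S : bool -> A -> Prop) : Prop :=
  forall s : seq (bool * A), s != [::] -> alternating s ->
    centered_in tau S s -> tau (\prod_(x <- s) x.2) = 0.

(* L = [:: (i_n, a_n); ...; (i_1, a_1)] (in product order),
   R = [:: (j_1, b_1); ...; (j_m, b_m)]; the product is
   a_n ... a_1 v b_1 ... b_m. *)
Definition free_typeB (tau tau' : A -> CC) (S V : bool -> A -> Prop) : Prop :=
  free tau S /\
  forall (L : seq (bool * A)) (h : bool) (v : A) (R : seq (bool * A)),
    alternating (L ++ (h, v) :: R) ->
    centered_in tau S (L ++ R) ->
    V h v ->
    tau' ((\prod_(x <- L) x.2) * v * (\prod_(x <- R) x.2)) =
      if (size L == size R) && (map fst (rev L) == map fst R) then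
        (\prod_(p <- zip (rev L) R) tau (p.1.2 * p.2.2)) * tau' v
      else 0.

Definition inf_free (tau tau' : A -> CC) (S : bool -> A -> Prop) : Prop :=
  forall s : seq (bool * A), s != [::] -> alternating s ->
    centered_in tau S s ->
    let a i := (nth (false, 0) s i).2 in
    tau (\prod_(i < size s) a i) = 0 /\
    tau' (\prod_(i < size s) a i) =
      \sum_(j < size s)
         tau (\prod_(i < size s) (if i == j then (tau' (a j))%:A else a i)).

Definition ideal_gen (B G : A -> Prop) : A -> Prop := fun p =>
  exists s : seq (A * A * A),
    (forall t, t \in s -> [/\ B t.1.1, G t.1.2 & B t.2]) /\
    p = \sum_(t <- s) t.1.1 * t.1.2 * t.2.

End Freeness.

(* Letters: inl i is X_{i+1}, inr j is Y_{j+1}.                        *)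
Definition letter (k l : nat) := ('I_k + 'I_l)%type.

Notation ncpoly k l := {malg CC[{fmonom (letter k l)}]}.

Definition Xv (k l : nat) (i : 'I_k) : ncpoly k l := << fmu (inl i : letter k l) >>.
Definition Yv (k l : nat) (j : 'I_l) : ncpoly k l := << fmu (inr j : letter k l) >>.

Definition polys_in (k l : nat) (P : pred (letter k l)) : ncpoly k l -> Prop :=
  fun p => forall m, m \in msupp p -> all P (m : seq (letter k l)).

Definition isX (k l : nat) (c : letter k l) : bool :=
  if c is inl _ then true else false.
Definition isY (k l : nat) (c : letter k l) : bool :=
  if c is inr _ then true else false.

Definition Alg1 k l := polys_in (@isX k l).
Definition Alg2 k l := polys_in (@isY k l).
Definition Alg (k l : nat) (b : bool) := if b then @Alg2 k l else @Alg1 k l.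

Definition Ideal1 k l (k' : nat) : ncpoly k l -> Prop :=
  ideal_gen (@Alg1 k l) (fun p => exists i : 'I_k, i < k' /\ p = Xv l i)%N.
Definition Ideal2 k l (l' : nat) : ncpoly k l -> Prop :=
  ideal_gen (@Alg2 k l) (fun p => exists j : 'I_l, j < l' /\ p = Yv k j)%N.
Definition Ideal k l k' l' : ncpoly k l -> Prop :=
  ideal_gen (fun _ => True) (fun p => Ideal1 k' p \/ Ideal2 l' p).

Definition KerAlg k l (k' l' : nat) : ncpoly k l -> Prop :=
  polys_in (fun c : letter k l =>
    match c with inl i => (k' <= i)%N | inr j => (l' <= j)%N end).

Definition Vsp k l k' l' (b : bool) : ncpoly k l -> Prop :=
  fun p => @Ideal k l k' l' p /\ @Alg k l b p.

From Pilot Require Import Defs.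
From HB Require Import structures.
From mathcomp Require Import all_boot all_order all_algebra.
From mathcomp Require Import finmap Rstruct complex monalg.

Set Implicit Arguments.
Unset Strict Implicit.
Unset Printing Implicit Defensive.

Import Order.TTheory GRing.Theory Num.Theory.
Local Open Scope ring_scope.

(** For [a] in the free algebra let [a'] be its part spanned by the monomials
    avoiding the generators X_1..X_k', Y_1..Y_l' of I ([ker_part]).  Then
    [a - a'] lies in I, so tau (a' b) = tau (a b) and [a'] is again centered in
    the same subalgebra, while tau' kills every product of such [a'].  For an
    alternating centered word the telescoping identity
      a_1 ... a_n - a_1' ... a_n' = sum_j a_1' ... a_(j-1)' (a_j - a_j') a_(j+1) ... a_n
    leaves terms whose middle factor [a_j - a_j'] lies in V_h, and freeness of
    type B evaluates them as tau' (a_j) times the pairing of a_(j-1)', ..., a_1'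
    with a_(j+1), ..., a_n.  The primes can be dropped inside the pairing, and
    by ordinary freeness the pairing equals tau (a_1 ... a_(j-1) a_(j+1) ... a_n):
    write the middle product a_(j-1) a_(j+1) as a centered element plus
    tau (a_(j-1) a_(j+1)) and induct. *)

Definition map_snd (T U : Type) (f : U -> U) (s : seq (T * U)) : seq (T * U) :=
  [seq (x.1, f x.2) | x <- s].
Arguments map_snd {T U} f s : simpl never.

Section MapSnd.
Variables (T U : Type) (f : U -> U).
Implicit Types (x : T * U) (s : seq (T * U)).

Lemma map_snd_cons x s : map_snd f (x :: s) = (x.1, f x.2) :: map_snd f s.
Proof. by []. Qed.

Lemma map_fst_map_snd s : map fst (map_snd f s) = map fst s.
Proof. by rewrite -map_comp. Qed.

Lemma take_map_snd n s : take n (map_snd f s) = map_snd f (take n s).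
Proof. by rewrite /map_snd map_take. Qed.

End MapSnd.

Section MalgScalars.
Variables (K : monomType) (R : comNzRingType).

Lemma malg_scalar_central (c : R) (g : {malg R[K]}) : g * c%:A = c *: g.
Proof.
rewrite -[c%:A]mul_malgC mulr1.
rewrite [in LHS](monalgE g) [in RHS](monalgE g) mulr_suml scaler_sumr.
apply: eq_bigr => m _; rewrite malgM_def fgmulUU mulm1; apply/malgP => m'.
by rewrite mcoeffZ !mcoeffU mulrnAr mulrC.
Qed.

End MalgScalars.

Section WordProducts.
Variable R : pzRingType.
Implicit Types (s : seq (bool * R)) (f : R -> R).

Lemma prod_nth_snd s : \prod_(i < size s) (nth (false, 0) s i).2 = \prod_(x <- s) x.2.
Proof. by rewrite (big_nth (false, 0)) big_mkord. Qed.

Lemma prod_nth_snd_set s (j : 'I_(size s)) y :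
  \prod_(i < size s) (if i == j then y else (nth (false, 0) s i).2) =
  \prod_(x <- take j s) x.2 * y * \prod_(x <- drop j.+1 s) x.2.
Proof.
rewrite (eq_bigr (fun i : 'I_(size s) =>
  if (i : nat) == j then y else (nth (false, 0) s i).2)) //.
case: j => /= j; elim: s j => [|x s IH] [|j] //= j_lt; rewrite big_ord_recl /=.
  rewrite (eq_bigr (fun i : 'I_(size s) => (nth (false, 0) s i).2)) //.
  by rewrite prod_nth_snd big_nil mul1r drop0.
rewrite (eq_bigr (fun i : 'I_(size s) =>
  if (i : nat) == j then y else (nth (false, 0) s i).2)) //.
by rewrite IH // big_cons !mulrA.
Qed.

Lemma prod_map_snd_telescope f s :
  \prod_(x <- s) x.2 = \prod_(x <- map_snd f s) x.2 +
    \sum_(j < size s) \prod_(x <- take j (map_snd f s)) x.2 *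
      ((nth (false, 0) s j).2 - f (nth (false, 0) s j).2) * \prod_(x <- drop j.+1 s) x.2.
Proof.
elim: s => [|[i a] s IH]; first by rewrite !big_nil big_ord0 addr0.
rewrite big_ord_recl map_snd_cons !big_cons.
rewrite (eq_bigr (fun j : 'I_(size s) => f a * (\prod_(x <- take j (map_snd f s)) x.2 *
   ((nth (false, 0) s j).2 - f (nth (false, 0) s j).2) * \prod_(x <- drop j.+1 s) x.2)));
  last by move=> j _; rewrite /= big_cons !mulrA.
rewrite -mulr_sumr [X in _ + (X + _)]/= big_nil mul1r drop0 /=.
by rewrite addrCA -mulrDr -IH -mulrDl subrK.
Qed.

End WordProducts.

Section Pairing.
Variables (A : lalgType CC) (tau : A -> CC).
Implicit Types (L R : seq (bool * A)) (f : A -> A).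

Lemma alternatingE L : alternating L = sorted (fun i j : bool => i != j) (map fst L).
Proof. by rewrite /alternating sorted_map. Qed.

Definition matching L R : bool :=
  (size L == size R) && (map fst (rev L) == map fst R).

Definition pairing L R : CC := \prod_(p <- zip (rev L) R) tau (p.1.2 * p.2.2).

Lemma matching_rcons_cons L R i a j b :
  matching (rcons L (i, a)) ((j, b) :: R) = (i == j) && matching L R.
Proof. by rewrite /matching rev_rcons size_rcons eqSS /= eqseq_cons andbCA. Qed.

Lemma pairing_rcons_cons L R i a j b :
  pairing (rcons L (i, a)) ((j, b) :: R) = tau (a * b) * pairing L R.
Proof. by rewrite /pairing rev_rcons /= big_cons. Qed.

Lemma matching_map_snd f L R : matching (map_snd f L) R = matching L R.
Proof. by rewrite /matching size_map -map_rev map_fst_map_snd. Qed.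

Lemma pairing_map_snd f L R :
  (forall a b, tau (f a * b) = tau (a * b)) -> pairing (map_snd f L) R = pairing L R.
Proof.
move=> tau_fMl; rewrite /pairing -map_rev.
by elim: (rev L) R => [|x L' IH] [|y R] //; rewrite /= !big_cons IH tau_fMl.
Qed.

Lemma free_typeB_pairing (tau' : A -> CC) (S V : bool -> A -> Prop) L h v R :
  free_typeB tau tau' S V -> alternating (L ++ (h, v) :: R) ->
  centered_in tau S (L ++ R) -> V h v ->
  tau' (\prod_(x <- L) x.2 * v * \prod_(x <- R) x.2) =
    if matching L R then pairing L R * tau' v else 0.
Proof. by case=> _; apply. Qed.

End Pairing.

Section FreePairing.
Variable A : lalgType CC.
(* monalg only gives noncommutative [{malg R[K]}] an lalgType structure, so the
   algebra axiom is assumed in this form; see [malg_scalar_central]. *)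
Hypothesis scalar_central : forall (t : CC) (x : A), x * t%:A = t *: x.
Variables (tau : {linear A -> CC^o}) (S : bool -> A -> Prop).
Hypothesis tau1 : tau 1 = 1.
Hypothesis tau_free : Defs.free tau S.
Hypothesis S_mul : forall h a b, S h a -> S h b -> S h (a * b).
Hypothesis S_subC : forall h a (t : CC), S h a -> S h (a - t%:A).
Implicit Types (L R : seq (bool * A)).

Lemma scalerAr_central (t : CC) (x y : A) : t *: (x * y) = x * (t *: y).
Proof. by rewrite -[t *: y]mulr_algl mulrA scalar_central scalerAl. Qed.

Lemma free_pairing L R h x :
  alternating (L ++ (h, x) :: R) -> centered_in tau S (L ++ R) ->
  tau (\prod_(y <- L) y.2 * \prod_(y <- R) y.2) =
    if matching L R then pairing tau L R else 0.
Proof.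
elim/last_ind: L R h x => [|L [i a] IH] [|[j b] R] h x alt cen.
- by rewrite !big_nil mul1r tau1 /pairing big_nil.
- by rewrite big_nil mul1r tau_free //; move: alt; apply: path_sorted.
- rewrite big_nil mulr1 /matching size_rcons /= tau_free -?size_eq0 ?size_rcons //.
    by move: alt; rewrite /alternating => /cat_sorted2[].
  by rewrite -[rcons _ _]cats0.
have [i_j altL] : i = j /\ alternating (L ++ (i, a) :: R).
  move: alt; rewrite !alternatingE !map_cat !map_rcons /= -cats1 -catA /=.
  rewrite !sorted_cat_cons /= => /andP[-> /and3P[ih hj pR]].
  (* Indices are boolean: both neighbours of the hole differ from [h]. *)
  have i_j : i = j by move: ih hj; case: (i) (j) (h) => [] [] [].
  by rewrite i_j pR.
subst j; rewrite matching_rcons_cons pairing_rcons_cons eqxx /=.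
have cenL : centered_in tau S (L ++ R).
  by move=> y; rewrite mem_cat => /orP[] y_in; apply: cen;
     rewrite mem_cat ?mem_rcons !inE y_in ?orbT.
have [[Sa _] [Sb _]] : (S i a /\ tau a = 0) /\ (S i b /\ tau b = 0).
  by split; apply: (cen (_, _)); rewrite mem_cat ?mem_rcons !inE eqxx ?orbT.
set c := a * b - (tau (a * b))%:A.
have tau_c : tau (\prod_(y <- L ++ (i, c) :: R) y.2) = 0.
  apply: tau_free; rewrite -?size_eq0 ?size_cat ?addnS //.
    by move: altL; rewrite !alternatingE !map_cat.
  move=> y; rewrite mem_cat inE => /orP[y_in|/orP[/eqP->|y_in]];
    try by apply: cenL; rewrite mem_cat y_in ?orbT.
  split; first exact/S_subC/S_mul.
  by rewrite linearB /= linearZ /= tau1 [_ *: _]mulr1 subrr.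
rewrite -cats1 big_cat big_seq1 big_cons /=.
have -> : \prod_(y <- L) y.2 * a * (b * \prod_(y <- R) y.2) =
    \prod_(y <- L ++ (i, c) :: R) y.2 +
    tau (a * b) *: (\prod_(y <- L) y.2 * \prod_(y <- R) y.2).
  by rewrite big_cat big_cons /= /c mulrBl mulrBr mulr_algl -scalerAr_central !mulrA subrK.
rewrite linearD linearZ /= tau_c add0r (IH R i a altL cenL).
by case: ifP => _; rewrite ?scaler0.
Qed.
End FreePairing.

Section PolysIn.
Variables (k l : nat).
Implicit Types (P : pred (letter k l)) (p q : ncpoly k l).

Lemma polys_in1 P : polys_in P 1.
Proof.
move=> m; rewrite -mpolyC1E => /(fsubsetP (msuppC_le _)).
by rewrite inE => /eqP ->; rewrite fm1.
Qed.

Lemma polys_inD P p q : polys_in P p -> polys_in P q -> polys_in P (p + q).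
Proof.
by move=> Pp Pq m /(fsubsetP (msuppD_le p q)); rewrite in_fsetU => /orP[/Pp|/Pq].
Qed.

Lemma polys_inB P p q : polys_in P p -> polys_in P q -> polys_in P (p - q).
Proof.
by move=> Pp Pq m /(fsubsetP (msuppB_le p q)); rewrite in_fsetU => /orP[/Pp|/Pq].
Qed.

Lemma polys_inZ P c p : polys_in P p -> polys_in P (c *: p).
Proof. by move=> Pp m /(fsubsetP (msuppZ_le c p)) /Pp. Qed.

Lemma polys_inM P p q : polys_in P p -> polys_in P q -> polys_in P (p * q).
Proof.
by move=> Pp Pq m /msuppM_le[m1 [m2 [/Pp Pm1 /Pq Pm2 ->]]]; rewrite fmM all_cat Pm1.
Qed.

Lemma polys_in_monom P c (m : {fmonom letter k l}) : all P m -> polys_in P << c *g m >>.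
Proof. by move=> Pm m' /(fsubsetP msuppU_le); rewrite inE => /eqP ->. Qed.

Lemma polys_in_sum P (I : Type) (r : seq I) (Q : pred I) (F : I -> ncpoly k l) :
  (forall i, Q i -> polys_in P (F i)) -> polys_in P (\sum_(i <- r | Q i) F i).
Proof.
move=> PF; apply: big_ind => //; last exact: polys_inD.
by move=> m; rewrite msupp0.
Qed.

Lemma polys_in_prod P (I : Type) (r : seq I) (F : I -> ncpoly k l) :
  (forall i, polys_in P (F i)) -> polys_in P (\prod_(i <- r) F i).
Proof. by move=> PF; apply: big_ind => //; [exact: polys_in1 | exact: polys_inM]. Qed.

Lemma AlgE h : @Alg k l h = polys_in (if h then @isY k l else @isX k l).
Proof. by case: h. Qed.

End PolysIn.

Section IdealGen.
Variables (A : lalgType CC) (B G : A -> Prop).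
Implicit Types (p q : A).

Lemma ideal_gen_generator x g y : B x -> G g -> B y -> ideal_gen B G (x * g * y).
Proof.
move=> Bx Gg By; exists [:: (x, g, y)]; split; last by rewrite big_seq1.
by move=> t; rewrite inE => /eqP ->.
Qed.

Lemma ideal_gen_mem g : B 1 -> G g -> ideal_gen B G g.
Proof. by move=> B1 Gg; rewrite -[g]mul1r -[_ * g]mulr1; apply: ideal_gen_generator. Qed.

Lemma ideal_gen_sum (I : eqType) (r : seq I) (Q : pred I) (F : I -> A) :
  (forall i, Q i -> ideal_gen B G (F i)) -> ideal_gen B G (\sum_(i <- r | Q i) F i).
Proof.
move=> IF; apply: big_ind => //.
  by exists [::]; split => //; rewrite big_nil.
move=> _ _ [s1 [Hs1 ->]] [s2 [Hs2 ->]]; exists (s1 ++ s2); split; last by rewrite big_cat.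
by move=> t; rewrite mem_cat => /orP[/Hs1|/Hs2].
Qed.

Lemma ideal_genMr b p : (forall x, B x -> B (x * b)) ->
  ideal_gen B G p -> ideal_gen B G (p * b).
Proof.
move=> BMr [s [Hs ->]]; exists [seq (t.1.1, t.1.2, t.2 * b) | t <- s]; split.
  by move=> _ /mapP[t /Hs[Bt1 Gt2 Bt3] ->]; split; last exact: BMr.
by rewrite big_map mulr_suml; apply: eq_bigr => t _; rewrite mulrA.
Qed.

End IdealGen.

Section KerPart.
Variables (k l k' l' : nat).
Local Notation A := (ncpoly k l).
Implicit Types (p : A) (P : pred (letter k l)).

Definition ker_letter (c : letter k l) : bool :=
  match c with inl i => (k' <= i)%N | inr j => (l' <= j)%N end.

Definition ker_part p : A := \sum_(m <- msupp p | all ker_letter m) << p@_m *g m >>.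

Lemma ker_part_KerAlg p : KerAlg k' l' (ker_part p).
Proof. by apply: polys_in_sum => m; apply: polys_in_monom. Qed.

Lemma polys_in_ker_part P p : polys_in P p -> polys_in P (ker_part p).
Proof.
move=> Pp; rewrite /ker_part big_seq_cond; apply: polys_in_sum => m /andP[m_in _].
exact/polys_in_monom/Pp.
Qed.

Lemma Ideal_monom c (m : {fmonom letter k l}) :
  ~~ all ker_letter m -> Ideal k' l' << c *g m >>.
Proof.
case: m => s /= /allPn[x + x_gen]; case/splitPr => u w.
have -> : << c *g FMonom (u ++ x :: w) >> =
    << c *g FMonom u >> * << fmu x >> * << 1 *g FMonom w >> :> A.
  rewrite !malgM_def !fgmulUU !mulr1; congr << _ *g _ >>.
  by apply/val_inj; rewrite /= !fmM fmuE -catA.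
apply: ideal_gen_generator => //.
by case: x x_gen => [i|j] /=; rewrite -ltnNge => lt; [left|right];
  apply: ideal_gen_mem; try exact: polys_in1; [exists i | exists j].
Qed.

Lemma Ideal_sub_ker_part p : Ideal k' l' (p - ker_part p).
Proof.
rewrite {1}(monalgE p) (bigID (fun m : {fmonom letter k l} => all ker_letter m)) /=.
rewrite addrC addrK.
by apply: ideal_gen_sum => m; apply: Ideal_monom.
Qed.

End KerPart.

Section InfinitesimalFreeness.
Variables (k k' l l' : nat).
Local Notation A := (ncpoly k l).
Local Notation kp := (ker_part k' l').
Variables (tau tau' : {linear A -> CC^o}).
Hypothesis tau1 : tau 1 = 1.
Hypothesis tau_Ideal : forall p, Ideal k' l' p -> tau p = 0.
Hypothesis tau'_KerAlg : forall p, KerAlg k' l' p -> tau' p = 0.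
Hypothesis typeB : free_typeB tau tau' (@Alg k l) (@Vsp k l k' l').

Lemma Alg_mul h a b : @Alg k l h a -> @Alg k l h b -> @Alg k l h (a * b).
Proof. by rewrite AlgE; apply: polys_inM. Qed.

Lemma Alg_subC h a (t : CC) : @Alg k l h a -> @Alg k l h (a - t%:A).
Proof. by rewrite AlgE => Aa; apply/polys_inB/polys_inZ/polys_in1. Qed.

Lemma tau_ker_partMl a b : tau (kp a * b) = tau (a * b).
Proof.
have Ib : Ideal k' l' ((a - kp a) * b) by apply: ideal_genMr (Ideal_sub_ker_part _ _ _).
(* Rewriting the goal with [tau_Ideal Ib] makes unification unfold [ker_part]. *)
by move/eqP: (tau_Ideal Ib); rewrite mulrBl linearB subr_eq0 eq_sym => /eqP.
Qed.

Lemma tau'_ker_part a : tau' (kp a) = 0.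
Proof. exact/tau'_KerAlg/ker_part_KerAlg. Qed.

Lemma tau'_prod_ker_part (s : seq (bool * A)) : tau' (\prod_(x <- map_snd kp s) x.2) = 0.
Proof.
by apply/tau'_KerAlg; rewrite big_map; apply: polys_in_prod => x; apply: ker_part_KerAlg.
Qed.

Lemma tau_free_pairing (L R : seq (bool * A)) h x :
  alternating (L ++ (h, x) :: R) -> centered_in tau (@Alg k l) (L ++ R) ->
  tau (\prod_(y <- L) y.2 * \prod_(y <- R) y.2) =
    if matching L R then pairing tau L R else 0.
Proof.
apply: free_pairing => //.
- exact: malg_scalar_central.
- exact: typeB.1.
- exact: Alg_mul.
- exact: Alg_subC.
Qed.

Lemma tau'_telescope_term (L R : seq (bool * A)) x :
  alternating (L ++ x :: R) -> centered_in tau (@Alg k l) (L ++ x :: R) ->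
  tau' (\prod_(y <- map_snd kp L) y.2 * (x.2 - kp x.2) * \prod_(y <- R) y.2) =
  tau (\prod_(y <- L) y.2 * (tau' x.2)%:A * \prod_(y <- R) y.2).
Proof.
case: x => h a /= alt cen.
have cenLR : centered_in tau (@Alg k l) (L ++ R).
  move=> y; rewrite mem_cat => y_in; apply: cen.
  by rewrite mem_cat inE; case/orP: y_in => ->; rewrite ?orbT.
have altV : alternating (map_snd kp L ++ (h, a - kp a) :: R).
  by move: alt; rewrite !alternatingE !map_cat map_fst_map_snd.
have cenV : centered_in tau (@Alg k l) (map_snd kp L ++ R).
  move=> y; rewrite mem_cat => /orP[/mapP[z z_in ->]|y_in]; last first.
    by apply: cenLR; rewrite mem_cat y_in orbT.
  have /cenLR[Az tz] : z \in L ++ R by rewrite mem_cat z_in.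
  split; first by rewrite AlgE in Az *; apply: polys_in_ker_part.
  by rewrite -[kp _]mulr1 tau_ker_partMl mulr1.
have V : Vsp k' l' h (a - kp a).
  have /cen[Aa _] : (h, a) \in L ++ (h, a) :: R by rewrite mem_cat inE eqxx orbT.
  split; first exact: Ideal_sub_ker_part.
  by rewrite AlgE in Aa *; apply/polys_inB/polys_in_ker_part.
rewrite (free_typeB_pairing typeB altV cenV V) matching_map_snd.
rewrite pairing_map_snd; last exact: tau_ker_partMl.
rewrite malg_scalar_central -scalerAl linearZ /= (tau_free_pairing alt cenLR).
rewrite linearB /= tau'_ker_part subr0.
by case: ifP => _; rewrite ?scaler0 // mulrC.
Qed.

End InfinitesimalFreeness.

Theorem lemma3p7 (k k' l l' : nat) (hk : (k' <= k)%N) (hl : (l' <= l)%N)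
  (tau tau' : {linear ncpoly k l -> CC^o})
  (tau1 : tau 1 = 1) (tau'1 : tau' 1 = 0)
  (hI : forall p, Ideal k' l' p -> tau p = 0)
  (hK : forall p, KerAlg k' l' p -> tau' p = 0)
  (hB : free_typeB tau tau' (@Alg k l) (@Vsp k l k' l')) :
  inf_free tau tau' (@Alg k l).
Proof.
move=> s s_nil alt cen a; rewrite /a prod_nth_snd; split; first exact: hB.1.
rewrite (prod_map_snd_telescope (ker_part k' l')) linearD linear_sum /=.
rewrite (tau'_prod_ker_part hK) add0r; apply: eq_bigr => j _.
have s_j : take j s ++ nth (false, 0) s j :: drop j.+1 s = s.
  by rewrite -drop_nth ?cat_take_drop.
by rewrite prod_nth_snd_set take_map_snd (tau'_telescope_term tau1 hI hK hB) // s_j.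
Qed.
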